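(* Let $x_1,\ldots,x_m,y_1,\ldots,y_n$ be elements of a nilpotent group $\Gamma$, regarded as $m+n$ distinct letters. Then there is a finite list $\eta_1,\ldots,\eta_r$ of formal commutators in the $x_i$ and $y_j$ such that: (i) in $\Gamma$, $[x_1\cdots x_m,y_1\cdots y_n]=\eta_1\cdots\eta_r$; (ii) for each pair $(i,i')$ some $\eta_j$ equals $[x_i,y_{i'}]$; (iii) every $\eta_j$ has at least one $x_i$ and at least one $y_{i'}$ among its arguments; (iv) the $\eta_j$ are pairwise distinct as formal commutators in the $x_i,y_{i'}$; (v) no $\eta_j$ has a component of the form $[x_i,x_{i'}]$ or $[y_i,y_{i'}]$; (vi) if $\eta_j$ is not of the form $[x_i,y_{i'}]$ then $\eta_j$ has total weight greater than 2.
   Context: $[u,v]=u^{-1}v^{-1}uv$. Formal commutators in letters: each letter is one, and $[\beta,\beta']$ is one whenever $\beta,\beta'$ are; they are interpreted in the group in the obvious way. The arguments of a formal commutator are the letters occurring in it; its total weight is the number of letter occurrences. Components: $C(x)=\{x\}$ for a letter and $C([\beta,\beta'])=C(\beta)\cup C(\beta')\cup\{[\beta,\beta']\}$. *)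

From Stdlib Require Import List.
From mathcomp Require Import all_boot.

Set Implicit Arguments.
Unset Strict Implicit.
Unset Printing Implicit Defensive.

Record group := Group {
  gcar :> Type;
  gmul : gcar -> gcar -> gcar;
  gone : gcar;
  ginv : gcar -> gcar;
  gmulA : forall a b c, gmul a (gmul b c) = gmul (gmul a b) c;
  gmul1g : forall a, gmul gone a = a;
  gmulVg : forall a, gmul (ginv a) a = gone
}.

Section GroupDefs.
Variable G : group.

Definition gcomm (u v : G) : G :=
  gmul (gmul (gmul (ginv u) (ginv v)) u) v.

Inductive gen (S : G -> Prop) : G -> Prop :=
  | gen_in g : S g -> gen S g
  | gen_one : gen S (@gone G)
  | gen_mul a b : gen S a -> gen S b -> gen S (gmul a b)
  | gen_inv a : gen S a -> gen S (ginv a).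

(* lower central series: lcs 0 = gamma_1 = G, lcs (k+1) = [lcs k, G] *)
Fixpoint lcs (k : nat) : G -> Prop :=
  match k with
  | 0 => fun _ => True
  | k'.+1 => gen (fun g => exists a b, lcs k' a /\ g = gcomm a b)
  end.

Definition nilpotent : Prop := exists c, forall g, lcs c g -> g = gone G.

Definition gprod (s : seq G) : G := foldr (@gmul G) (@gone G) s.
End GroupDefs.

Inductive fcomm (L : Type) : Type :=
  | FLet : L -> fcomm L
  | FComm : fcomm L -> fcomm L -> fcomm L.
Arguments FLet {L}.
Arguments FComm {L}.

Fixpoint feval (G : group) (L : Type) (v : L -> G) (b : fcomm L) : G :=
  match b with
  | FLet x => v x
  | FComm b1 b2 => gcomm (feval v b1) (feval v b2)
  end.

Fixpoint occurs (L : Type) (x : L) (b : fcomm L) : Prop :=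
  match b with
  | FLet y => y = x
  | FComm b1 b2 => occurs x b1 \/ occurs x b2
  end.

Fixpoint fweight (L : Type) (b : fcomm L) : nat :=
  match b with
  | FLet _ => 1
  | FComm b1 b2 => fweight b1 + fweight b2
  end.

Fixpoint component (L : Type) (c b : fcomm L) : Prop :=
  match b with
  | FLet _ => c = b
  | FComm b1 b2 => component c b1 \/ component c b2 \/ c = b
  end.

From Stdlib Require Import List.
From Stdlib Require FinFun.
From mathcomp Require Import all_boot.

Set Implicit Arguments.
Unset Strict Implicit.
Unset Printing Implicit Defensive.

(* Only two identities are used, and both hold in every group.  Peeling off the x's one at a time and expanding every
   conjugation by a single letter with the second identity writes
   [x_1...x_m, y_1...y_n] as an ordered product of left-normed commutators
   [x_i, y_j, z_1, ..., z_k].  Such a commutator contains an x and a y, has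
   weight k + 2 and [x_i, y_j] as its only component of weight 2, and distinct
   terms of the expansion have distinct letter sequences. *)

Section GroupIdentities.
Variable G : group.
Local Infix "\*" := (@gmul G) (at level 40, left associativity).
Local Notation "1" := (@gone G).
Local Notation inv := (@ginv G).

Lemma mulgV (a : G) : a \* inv a = 1.
Proof.
rewrite -[a \* inv a]gmul1g -{1}(gmulVg (inv a)).
by rewrite -gmulA (gmulA (inv a)) gmulVg gmul1g gmulVg.
Qed.

Lemma mulg1 (a : G) : a \* 1 = a.
Proof. by rewrite -(gmulVg a) gmulA mulgV gmul1g. Qed.

Lemma mulKg (a b : G) : inv a \* (a \* b) = b.
Proof. by rewrite gmulA gmulVg gmul1g. Qed.

Lemma mulKVg (a b : G) : a \* (inv a \* b) = b.
Proof. by rewrite gmulA mulgV gmul1g. Qed.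

Lemma invg1 : inv 1 = 1.
Proof. by rewrite -{2}(gmulVg 1) mulg1. Qed.

Lemma invMg (a b : G) : inv (a \* b) = inv b \* inv a.
Proof.
have abK : a \* b \* (inv b \* inv a) = 1 by rewrite -!gmulA mulKVg mulgV.
by rewrite -[inv (a \* b)]mulg1 -abK gmulA gmulVg gmul1g.
Qed.

Definition gconj (a b : G) : G := inv b \* a \* b.

Lemma conjMg (a b c : G) : gconj (a \* b) c = gconj a c \* gconj b c.
Proof. by rewrite /gconj -!gmulA mulKVg. Qed.

Lemma conj1g (a : G) : gconj 1 a = 1.
Proof. by rewrite /gconj -gmulA gmul1g gmulVg. Qed.

Lemma conjg1 (a : G) : gconj a 1 = a.
Proof. by rewrite /gconj invg1 gmul1g mulg1. Qed.

Lemma conjgM (a b c : G) : gconj a (b \* c) = gconj (gconj a b) c.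
Proof. by rewrite /gconj invMg -!gmulA. Qed.

Lemma conjg_mulR (a b : G) : gconj a b = a \* gcomm a b.
Proof. by rewrite /gcomm /gconj -!gmulA mulKVg. Qed.

Lemma commgEl (a b : G) : gcomm a b = inv a \* gconj a b.
Proof. by rewrite /gcomm /gconj -!gmulA. Qed.

Lemma commMgJ (a b c : G) : gcomm (a \* b) c = gconj (gcomm a c) b \* gcomm b c.
Proof. by rewrite /gcomm /gconj invMg -!gmulA !mulKVg. Qed.

Lemma comm1g (a : G) : gcomm 1 a = 1.
Proof. by rewrite /gcomm invg1 gmul1g mulg1 gmulVg. Qed.

Lemma gprod_cat (s1 s2 : seq G) : gprod (s1 ++ s2) = gprod s1 \* gprod s2.
Proof. by elim: s1 => [|a s IHs] /=; rewrite ?gmul1g // IHs gmulA. Qed.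

End GroupIdentities.

Section LeftNormed.
Variable L : eqType.

(* The pair (a, [:: z_1; ...; z_k]) encodes [a, z_1, ..., z_k]. *)
Definition left_normed (p : L * seq L) : fcomm L :=
  foldl (fun b z => FComm b (FLet z)) (FLet p.1) p.2.

Lemma left_normed_rcons a s z :
  left_normed (a, rcons s z) = FComm (left_normed (a, s)) (FLet z).
Proof. by rewrite /left_normed /= -cats1 foldl_cat. Qed.

Lemma left_normed_inj : injective left_normed.
Proof.
move=> [a s] [a' s']; elim/last_ind: s s' => [|s z IHs] s';
  case/lastP: s' => [|s' z']; rewrite ?left_normed_rcons //=.
- by case=> ->.
- by case=> /IHs [-> ->] ->.
Qed.

Lemma occurs_left_normed_head a s : occurs a (left_normed (a, s)).
Proof. by elim/last_ind: s => [|s z IHs]; rewrite ?left_normed_rcons //=; left. Qed.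

Lemma occurs_left_normed_tail l a s : l \in s -> occurs l (left_normed (a, s)).
Proof.
elim/last_ind: s => [|s z IHs] //; rewrite left_normed_rcons mem_rcons inE /=.
by case/orP => [/eqP ->|/IHs]; [right|left].
Qed.

Lemma fweight_left_normed a s : fweight (left_normed (a, s)) = (size s).+1.
Proof.
by elim/last_ind: s => [|s z IHs] //; rewrite left_normed_rcons /= IHs size_rcons addn1.
Qed.

Lemma weight2_component_left_normed l1 l2 a b s :
  component (FComm (FLet l1) (FLet l2)) (left_normed (a, b :: s)) ->
  l1 = a /\ l2 = b.
Proof.
elim/last_ind: s => [|s z IHs]; first by case=> [|[|[-> ->]]].
rewrite -rcons_cons left_normed_rcons => -[/IHs //|[//|[lnormE _]]].
by have := fweight_left_normed a (b :: s); rewrite -lnormE.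
Qed.

End LeftNormed.

Section Expansion.
Variable L : eqType.
Implicit Types (W : seq (L * seq L)) (zs : seq L).

Definition extend (z : L) (w : L * seq L) : L * seq L := (w.1, rcons w.2 z).

Lemma extend_inj z : injective (extend z).
Proof. by rewrite /extend => -[a s] [a' s'] /= [-> /(@rcons_injl _ z) ->]. Qed.

(* [expand_conj1 W z] is a product expansion of (prod W)^z, and
   [expand_conj W zs] one of (prod W)^(prod zs). *)
Fixpoint expand_conj1 W z :=
  if W is w :: W' then w :: extend z w :: expand_conj1 W' z else [::].

Definition expand_conj W zs := foldl expand_conj1 W zs.

(* Dropping the head x from the expansion of x^Y leaves one of [x, Y]. *)
Definition expand_comm1 x zs := behead (expand_conj [:: (x, [::])] zs).

Fixpoint expand_comm xs ys :=
  if xs is x :: xs' then expand_conj (expand_comm1 x ys) xs' ++ expand_comm xs' ys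
  else [::].

Lemma perm_expand_conj1 W z : perm_eq (expand_conj1 W z) (W ++ map (extend z) W).
Proof.
elim: W => [|w W IHW] //=; rewrite perm_cons perm_sym -cat1s perm_catCA /=.
by rewrite perm_cons perm_sym.
Qed.

Lemma mem_expand_conj1 p W z :
  (p \in expand_conj1 W z) = (p \in W) || (p \in map (extend z) W).
Proof. by rewrite (perm_mem (perm_expand_conj1 W z)) mem_cat. Qed.

Lemma uniq_expand_conj1 W z :
  uniq W -> (forall w, w \in W -> z \notin w.2) -> uniq (expand_conj1 W z).
Proof.
move=> uW zW; rewrite (perm_uniq (perm_expand_conj1 W z)) cat_uniq uW.
rewrite map_inj_uniq ?uW ?andbT; last exact: extend_inj.
apply/hasP => -[_ /mapP [w _ ->] /zW].
by rewrite mem_rcons mem_head.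
Qed.

Lemma sub_expand_conj W zs : {subset W <= expand_conj W zs}.
Proof.
elim: zs W => [|z zs IHzs] W p //= pW.
by apply: IHzs; rewrite mem_expand_conj1 pW.
Qed.

Lemma expand_conj_cons w W zs :
  expand_conj (w :: W) zs = w :: behead (expand_conj (w :: W) zs).
Proof. by elim: zs W => [|z zs IHzs] W //=; rewrite IHzs. Qed.

Lemma mem_expand_conj a s W zs : (a, s) \in expand_conj W zs ->
  exists s0 s1, [/\ (a, s0) \in W, s = s0 ++ s1 & {subset s1 <= zs}].
Proof.
elim: zs W s => [|z zs IHzs] W s /=.
  by move=> asW; exists s, [::]; rewrite cats0.
case/IHzs => s0 [s1 [+ -> s1zs]]; rewrite mem_expand_conj1.
case/orP => [as0W|/mapP [[a' t] atW [-> ->]]].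
  by exists s0, s1; split=> // l /s1zs; rewrite inE orbC => ->.
exists t, (z :: s1); split=> //; first by rewrite cat_rcons.
by move=> l; rewrite !inE => /orP [->|/s1zs ->]; rewrite ?orbT.
Qed.

Lemma uniq_expand_conj W zs : uniq W -> uniq zs ->
  (forall w z, w \in W -> z \in zs -> z \notin w.2) -> uniq (expand_conj W zs).
Proof.
elim: zs W => [|z zs IHzs] W //= uW /andP [zNzs uzs] zsW.
apply: IHzs => //; first by apply: uniq_expand_conj1 => // w /zsW; apply; rewrite mem_head.
move=> w' z'; rewrite mem_expand_conj1 => /orP [w'W|/mapP [w wW ->]] z'zs.
  by apply: zsW; rewrite ?inE ?z'zs ?orbT.
rewrite /= mem_rcons inE negb_or zsW ?inE ?z'zs ?orbT // andbT.
by apply: contraNneq zNzs => <-.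
Qed.

Lemma uniq_expand_comm1 x ys : uniq ys -> uniq ((x, [::]) :: expand_comm1 x ys).
Proof. by move=> uys; rewrite -expand_conj_cons uniq_expand_conj // => w z /[!inE] /eqP ->. Qed.

Lemma mem_expand_comm1 a s x ys : uniq ys -> (a, s) \in expand_comm1 x ys ->
  [/\ a = x, s != [::] & {subset s <= ys}].
Proof.
move=> uys asA; have /andP [xNA _] := uniq_expand_comm1 x uys.
have : (a, s) \in expand_conj [:: (x, [::])] ys by rewrite expand_conj_cons inE asA orbT.
case/mem_expand_conj => s0 [s1 [/[!inE] /eqP [ax s0E] sE s1ys]].
subst a s0 s; split=> //.
by case: s1 asA {s1ys} => // asA; rewrite asA in xNA.
Qed.

Lemma mem_expand_comm1_pair x y ys : y \in ys -> (x, [:: y]) \in expand_comm1 x ys.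
Proof.
case/splitPr => ys1 ys2.
have : (x, [:: y]) \in expand_conj [:: (x, [::])] (ys1 ++ y :: ys2).
  rewrite /expand_conj foldl_cat /=; apply: sub_expand_conj.
  rewrite mem_expand_conj1; apply/orP; right.
  exact: (map_f (extend y) (sub_expand_conj _ (mem_head _ _))).
by rewrite expand_conj_cons inE => /orP [|//] /eqP.
Qed.

Lemma mem_expand_comm a s xs ys : uniq ys -> (a, s) \in expand_comm xs ys ->
  a \in xs /\ exists b s', s = b :: s' /\ b \in ys.
Proof.
move=> uys; elim: xs => [|x xs IHxs] //=; rewrite mem_cat inE.
case/orP => [/mem_expand_conj [s0 [s1 [/(mem_expand_comm1 uys) [-> s0N0 s0ys] -> _]]]|].
  split; first by rewrite eqxx.
  case: s0 s0N0 s0ys => [|b s0] // _ s0ys; exists b, (s0 ++ s1).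
  by split=> //; apply: s0ys; rewrite mem_head.
by case/IHxs => -> bs; split; rewrite ?orbT.
Qed.

Lemma mem_expand_comm_pair x y xs ys :
  x \in xs -> y \in ys -> (x, [:: y]) \in expand_comm xs ys.
Proof.
move=> + yys; elim: xs => [|x0 xs IHxs] //=; rewrite inE mem_cat.
case/orP => [/eqP ->|/IHxs ->]; last by rewrite orbT.
by rewrite sub_expand_conj ?mem_expand_comm1_pair.
Qed.

Lemma uniq_expand_comm xs ys : uniq xs -> uniq ys ->
  (forall z, z \in xs -> z \notin ys) -> uniq (expand_comm xs ys).
Proof.
move=> + uys; elim: xs => [|x xs IHxs] //= /andP [xNxs uxs] xsNys.
rewrite cat_uniq IHxs ?andbT //; last by move=> z zxs; rewrite xsNys ?inE ?zxs ?orbT.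
apply/andP; split.
  apply: uniq_expand_conj => //; first by case/andP: (uniq_expand_comm1 x uys).
  move=> [a s] z /(mem_expand_comm1 uys) [_ _ sys] zxs /=.
  by apply: contraNN (xsNys z _) => [/sys //|]; rewrite inE zxs orbT.
apply/hasPn => -[a s] /(mem_expand_comm uys) [axs _].
apply/negP => /mem_expand_conj [s0 [s1 [/(mem_expand_comm1 uys) [ax _ _] _ _]]].
by move: xNxs; rewrite -ax axs.
Qed.

Variables (Gm : group) (v : L -> Gm).
Local Notation gprod_lnorm W := (gprod (map (feval v) (map (@left_normed L) W))).

Lemma prod_expand_conj1 W z :
  gprod_lnorm (expand_conj1 W z)
  = gconj (gprod_lnorm W) (v z).
Proof.
elim: W => [|[a s] W IHW] /=; first by rewrite conj1g.
by rewrite IHW conjMg left_normed_rcons gmulA -conjg_mulR.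
Qed.

Lemma prod_expand_conj W zs :
  gprod_lnorm (expand_conj W zs)
  = gconj (gprod_lnorm W) (gprod (map v zs)).
Proof.
elim: zs W => [|z zs IHzs] W /=; first by rewrite conjg1.
by rewrite IHzs prod_expand_conj1 conjgM.
Qed.

Lemma prod_expand_comm1 x ys :
  gprod_lnorm (expand_comm1 x ys) = gcomm (v x) (gprod (map v ys)).
Proof.
have := prod_expand_conj [:: (x, [::])] ys.
by rewrite expand_conj_cons /= mulg1 commgEl => <-; rewrite mulKg.
Qed.

Lemma prod_expand_comm xs ys :
  gprod_lnorm (expand_comm xs ys)
  = gcomm (gprod (map v xs)) (gprod (map v ys)).
Proof.
elim: xs => [|x xs IHxs] /=; first by rewrite comm1g.
by rewrite !map_cat gprod_cat prod_expand_conj prod_expand_comm1 IHxs commMgJ.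
Qed.

End Expansion.

Lemma inP (T : eqType) (a : T) (s : seq T) : reflect (List.In a s) (a \in s).
Proof.
elim: s => [|b s IHs] /=; first by constructor.
rewrite inE; apply: (iffP orP) => [[/eqP ->|/IHs]|[->|/IHs ->]]; rewrite ?eqxx ?orbT;
  by [left|right].
Qed.

Lemma uniq_NoDup (T : eqType) (s : seq T) : uniq s -> List.NoDup s.
Proof.
elim: s => [|a s IHs] /=; first by constructor.
by case/andP => /inP aNs /IHs; constructor.
Qed.

Theorem lemmaB5 (Gam : group) (m n : nat) (x : 'I_m -> Gam) (y : 'I_n -> Gam) :
  nilpotent Gam ->
  let val := fun l : 'I_m + 'I_n =>
               match l with inl i => x i | inr j => y j end in
  exists eta : seq (fcomm ('I_m + 'I_n)),
    (* (i) *)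
    gcomm (gprod (map x (enum 'I_m))) (gprod (map y (enum 'I_n)))
      = gprod (map (feval val) eta) /\
    (* (ii) *)
    (forall (i : 'I_m) (i' : 'I_n),
        List.In (FComm (FLet (inl i)) (FLet (inr i'))) eta) /\
    (* (iii) *)
    (forall e, List.In e eta ->
        (exists i : 'I_m, occurs (inl i) e) /\
        (exists i' : 'I_n, occurs (inr i') e)) /\
    (* (iv) *)
    List.NoDup eta /\
    (* (v) *)
    (forall e, List.In e eta ->
        (forall i i' : 'I_m, ~ component (FComm (FLet (inl i)) (FLet (inl i'))) e) /\
        (forall i i' : 'I_n, ~ component (FComm (FLet (inr i)) (FLet (inr i'))) e)) /\
    (* (vi) *)
    (forall e, List.In e eta ->
        (~ exists (i : 'I_m) (i' : 'I_n), e = FComm (FLet (inl i)) (FLet (inr i'))) ->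
        (2 < fweight e)%N).
Proof.
move=> _ val.
pose xs : seq ('I_m + 'I_n) := map inl (enum 'I_m).
pose ys : seq ('I_m + 'I_n) := map inr (enum 'I_n).
have uxs : uniq xs by rewrite map_inj_uniq ?enum_uniq // => a b [].
have uys : uniq ys by rewrite map_inj_uniq ?enum_uniq // => a b [].
have xsNys z : z \in xs -> z \notin ys by case/mapP => i _ ->; apply/mapP => -[].
have etaP e : List.In e (map (@left_normed _) (expand_comm xs ys)) ->
    exists i j s, e = left_normed (inl i, inr j :: s).
  case/in_map_iff => -[a s] [<- /inP /(mem_expand_comm uys) [+ [b [s' [-> +]]]]].
  by case/mapP => i _ -> /mapP [j _ ->]; exists i, j, s'.
exists (map (@left_normed _) (expand_comm xs ys)); split.
  by rewrite prod_expand_comm -!map_comp.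
split=> [i j|].
  apply: (in_map (@left_normed _) _ (inl i, [:: inr j])); apply/inP.
  by apply: mem_expand_comm_pair; rewrite map_f ?mem_enum.
split=> [e /etaP [i [j [s ->]]]|].
  by split; [exists i; apply: occurs_left_normed_head
            |exists j; apply/occurs_left_normed_tail/mem_head].
split.
  apply: FinFun.Injective_map_NoDup; first exact: left_normed_inj.
  exact/uniq_NoDup/uniq_expand_comm.
split=> e /etaP [i [j [s ->]]].
  by split=> k k' /weight2_component_left_normed [].
rewrite fweight_left_normed; case: s => [|? ?] // notPair.
by case: notPair; exists i, j.
Qed.
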